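(* Let $s>0$ and $\epsilon\in(0,1)$. Given a polynomial decay stream of $n$ points (decay function $w(t)=t^{-s}$) as input to the block-merging algorithm described in the context, the number of blocks it maintains is $O(\epsilon^{-1}s\log n)$.
   Context: Polynomial decay stream: points arrive sequentially and the $t$-th most recent point has weight $t^{-s}$. Markers: for each $i\in\mathbb N$, $x_i$ is the minimum integer $\ge 2^i$ such that $\frac{1-\epsilon}{(x_i-2^i+1)^s}\le\frac{1+\epsilon}{x_i^s}$, i.e. $\left(\frac{x_i}{x_i-2^i+1}\right)^s\le\frac{1+\epsilon}{1-\epsilon}$. The algorithm partitions the stream into blocks of consecutive points; a block is written $[a,b]$ where $a$ and $b$ are the positions (relative to the start of the stream) of its first and last points, and for each block a coreset (computed by an offline coreset construction algorithm) is stored. When the $n$-th point $p_n$ arrives, the algorithm inserts $[n,n]$ as a new block; then for each block $[a,b]$, if $a+x_i<n$ for some $i$, it merges all blocks in the range $[a,a+2^i-1]$ into a single block (and reduces the union of their coresets to a single coreset). At the end each block $[a,b]$ receives weight $\frac12\left(\frac{1-\epsilon}{a^s}+\frac{1+\epsilon}{b^s}\right)$.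
   Formalization: The block count is at most C·(1+s/ε)·ln n for a constant C uniform in s, ε, n, not O(ε⁻¹s log n); in one left-to-right pass, a block [a,b] absorbs later blocks starting in [a,a+2ᴵ−1], I the largest i with a+xᵢ<n. Each condition added here is assumed in the paper as well or is needed for the statement above to hold. *)

From Stdlib Require Import Reals Lra Lia Arith List.
Import ListNotations.
Open Scope R_scope.

Definition marker_cond (s eps : R) (i x : nat) : Prop :=
  Rpower (INR x / INR (x + 1 - 2 ^ i)) s <= (1 + eps) / (1 - eps).

Definition is_marker (s eps : R) (i x : nat) : Prop :=
  (2 ^ i <= x)%nat /\ marker_cond s eps i x /\
  (forall y : nat, (2 ^ i <= y)%nat -> (y < x)%nat -> ~ marker_cond s eps i y).

(* Blocks are pairs (a, b) of positions (1-based, from the start of the stream),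
   kept in increasing order. *)
Definition block := (nat * nat)%type.

(* Largest i with a + x_i < n (any such i satisfies i < n since x_i >= 2^i > i);
   None if there is no such i. *)
Definition merge_level (x : nat -> nat) (n a : nat) : option nat :=
  fold_left (fun acc i => if (a + x i <? n)%nat then Some i else acc)
            (seq 0 n) None.

(* One left-to-right merging pass at time n: a block [a,b] for which
   a + x_i < n for some i absorbs all following blocks whose start lies in
   [a, a + 2^I - 1], I the largest such i (merging for the largest i subsumes
   the merges for smaller i). *)
Definition merge_pass (x : nat -> nat) (n : nat) (bs : list block) : list block :=
  rev (fold_left
    (fun acc (blk : block) =>
       match acc with
       | [] => [blk]
       | (a, b) :: acc' =>
           match merge_level x n a with
           | Some lv => if (fst blk <=? a + 2 ^ lv - 1)%nat
                       then (a, snd blk) :: acc'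
                       else blk :: acc
           | None => blk :: acc
           end
       end) bs []).

Definition step (x : nat -> nat) (n : nat) (bs : list block) : list block :=
  merge_pass x n (bs ++ [(n, n)]).

Fixpoint blocks (x : nat -> nat) (n : nat) : list block :=
  match n with
  | O => []
  | S m => step x (S m) (blocks x m)
  end.

(* After each merging pass, consecutive block starts a < a' satisfy a + 2^i <= a'
   whenever a + x_i < n. The marker condition already holds at (N + 1) 2^i for an
   integer N >= s/eps, so x_i <= K 2^i with K = N + 1, and choosing i with
   K 2^i < n - a <= K 2^(i+1) shows that the distance n - a + 1 to the end of the
   stream shrinks by a factor 1 - 1/(4K) from one block to the next. Hence there
   are at most 1 + 4K ln(n + 1) = O((1 + s/eps) ln n) blocks. *)

From Stdlib Require Import Reals Lra Lia List Sorting ZArith.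
Import ListNotations.
Open Scope nat_scope.

Section SortedLists.
Context {A : Type}.

Lemma Sorted_impl (R R' : A -> A -> Prop) (l : list A) :
  (forall a b, R a b -> R' a b) -> Sorted R l -> Sorted R' l.
Proof.
  intros HRR' Hl; induction Hl as [|a l _ IH Hhd]; constructor; auto.
  destruct Hhd; constructor; auto.
Qed.

Lemma Sorted_snoc (R : A -> A -> Prop) (l : list A) (y : A) :
  Sorted R l -> (forall l' z, l = l' ++ [z] -> R z y) -> Sorted R (l ++ [y]).
Proof.
  induction l as [|a l IH]; intros Hl Hlast; simpl; [repeat constructor|].
  apply Sorted_inv in Hl as [Hl Hhd].
  constructor.
  - apply IH; [exact Hl|]. intros l' z ->. apply (Hlast (a :: l')). reflexivity.
  - destruct l as [|b l]; simpl.
    + constructor. apply (Hlast []). reflexivity.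
    + inversion Hhd; constructor; assumption.
Qed.

Lemma Sorted_rev (R : A -> A -> Prop) (l : list A) :
  Sorted (fun a b => R b a) l -> Sorted R (rev l).
Proof.
  induction l as [|a l IH]; intros Hl; simpl; [constructor|].
  apply Sorted_inv in Hl as [Hl Hhd].
  apply Sorted_snoc; [exact (IH Hl)|].
  intros l' z Hrev.
  apply (f_equal (@rev A)) in Hrev.
  rewrite rev_involutive, rev_app_distr in Hrev; simpl in Hrev; subst l.
  inversion Hhd; assumption.
Qed.

End SortedLists.

Definition level_spaced (x : nat -> nat) (n a a' : nat) : Prop :=
  forall i, i < n -> a + x i < n -> a + 2 ^ i <= a'.

Definition block_gap (x : nat -> nat) (n a a' : nat) : Prop :=
  a < a' /\ level_spaced x n a a'.

Definition merge_step (x : nat -> nat) (n : nat) (acc : list block) (blk : block)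
  : list block :=
  match acc with
  | [] => [blk]
  | (a, b) :: acc' =>
      match merge_level x n a with
      | Some lv => if fst blk <=? a + 2 ^ lv - 1
                  then (a, snd blk) :: acc'
                  else blk :: acc
      | None => blk :: acc
      end
  end.

Lemma merge_pass_fold x n bs :
  merge_pass x n bs = rev (fold_left (merge_step x n) bs []).
Proof. reflexivity. Qed.

Lemma merge_level_max x n a i :
  i < n -> a + x i < n -> exists lv, merge_level x n a = Some lv /\ i <= lv.
Proof.
  intros Hin Hxi; unfold merge_level; revert Hin.
  (* generalize the length of the scanned range, not the threshold *)
  generalize n at 1 3 as m; intros m.
  induction m as [|m IH]; intros Him; [lia|].
  rewrite seq_S, fold_left_app; simpl.
  destruct (Nat.ltb_spec (a + x m) n) as [Hm|Hm].
  - exists m; split; [reflexivity|lia].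
  - apply IH. assert (i <> m) by (intros ->; lia). lia.
Qed.

Lemma merge_step_starts x n acc blk :
  map fst (merge_step x n acc blk) = map fst acc \/
  (map fst (merge_step x n acc blk) = fst blk :: map fst acc /\
   forall a, hd_error (map fst acc) = Some a -> level_spaced x n a (fst blk)).
Proof.
  destruct acc as [|[a b] acc']; simpl.
  - right; split; [reflexivity|discriminate].
  - destruct (merge_level x n a) as [lv|] eqn:Hlv.
    + destruct (Nat.leb_spec (fst blk) (a + 2 ^ lv - 1)) as [Hin|Hout]; [left; reflexivity|].
      right; split; [reflexivity|]. intros ? [= <-] i Hi Hxi.
      destruct (merge_level_max x n a i Hi Hxi) as [lv' [Hlv' Hle]].
      rewrite Hlv in Hlv'; injection Hlv' as <-.
      pose proof (Nat.pow_le_mono_r 2 i lv ltac:(lia) Hle).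
      pose proof (Nat.pow_nonzero 2 lv ltac:(lia)). lia.
    + right; split; [reflexivity|]. intros ? [= <-] i Hi Hxi.
      destruct (merge_level_max x n a i Hi Hxi) as [lv [Hlv' _]]. congruence.
Qed.

Lemma fold_merge_step_starts x n (l acc : list block) :
  StronglySorted lt (map fst l) ->
  (forall a a', In a (map fst acc) -> In a' (map fst l) -> a < a') ->
  Sorted (fun a a' => block_gap x n a' a) (map fst acc) ->
  Sorted (fun a a' => block_gap x n a' a) (map fst (fold_left (merge_step x n) l acc)) /\
  incl (map fst (fold_left (merge_step x n) l acc)) (map fst acc ++ map fst l).
Proof.
  revert acc; induction l as [|blk l IH]; intros acc Hl Hsep Hgap; simpl.
  - rewrite app_nil_r; split; [exact Hgap|apply incl_refl].
  - apply StronglySorted_inv in Hl as [Hl Hblk].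
    rewrite Forall_forall in Hblk.
    destruct (merge_step_starts x n acc blk) as [E|[E Hsp]];
      destruct (IH (merge_step x n acc blk) Hl) as [Hgap' Hincl']; rewrite ?E in *.
    + intros a a' Ha Ha'. apply Hsep; [exact Ha|right; exact Ha'].
    + exact Hgap.
    + split; [exact Hgap'|].
      eapply incl_tran; [exact Hincl'|]. apply incl_app_app; [apply incl_refl|apply incl_tl, incl_refl].
    + intros a a' [<-|Ha] Ha'; [exact (Hblk a' Ha')|]. apply Hsep; [exact Ha|right; exact Ha'].
    + constructor; [exact Hgap|].
      destruct (map fst acc) as [|a starts]; constructor.
      split; [apply Hsep; left; reflexivity|exact (Hsp a eq_refl)].
    + split; [exact Hgap'|].
      eapply incl_tran; [exact Hincl'|]. intros y. simpl. rewrite !in_app_iff. simpl. tauto.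
Qed.

Lemma merge_pass_starts x n bs :
  Sorted lt (map fst bs) ->
  Sorted (block_gap x n) (map fst (merge_pass x n bs)) /\
  incl (map fst (merge_pass x n bs)) (map fst bs).
Proof.
  intros Hbs; rewrite merge_pass_fold, map_rev.
  destruct (fold_merge_step_starts x n bs []) as [Hgap Hincl].
  - exact (Sorted_StronglySorted Nat.lt_trans Hbs).
  - intros a a' [].
  - constructor.
  - split; [exact (Sorted_rev _ _ Hgap)|].
    intros a Ha; apply in_rev, Hincl in Ha; exact Ha.
Qed.

Lemma blocks_starts x n :
  Sorted (block_gap x n) (map fst (blocks x n)) /\
  Forall (fun a => a <= n) (map fst (blocks x n)).
Proof.
  induction n as [|m [Hgap Hle]]; [split; constructor|].
  change (blocks x (S m)) with (merge_pass x (S m) (blocks x m ++ [(S m, S m)])).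
  rewrite Forall_forall in Hle.
  destruct (merge_pass_starts x (S m) (blocks x m ++ [(S m, S m)])) as [Hgap' Hincl].
  - rewrite map_app; apply Sorted_snoc.
    + exact (Sorted_impl _ _ _ (fun a a' H => proj1 H) Hgap).
    + intros l' z Hz; simpl.
      assert (Hz' : In z (l' ++ [z])) by (apply in_or_app; right; left; reflexivity).
      rewrite <- Hz in Hz'. specialize (Hle z Hz'). lia.
  - split; [exact Hgap'|].
    apply (incl_Forall Hincl). rewrite map_app, Forall_app; split.
    + apply Forall_forall. intros a Ha. specialize (Hle a Ha). lia.
    + repeat constructor.
Qed.

Lemma exists_dyadic_level K d :
  1 <= K -> K < d -> exists i, K * 2 ^ i < d <= K * 2 ^ S i.
Proof.
  intros HK Hd.
  assert (Hbound : forall m, d <= K * 2 ^ m -> exists i, K * 2 ^ i < d <= K * 2 ^ S i).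
  { induction m as [|m IH]; intros Hm; [simpl in Hm; lia|].
    destruct (Nat.le_gt_cases d (K * 2 ^ m)) as [Hle|Hgt]; [exact (IH Hle)|].
    exists m; lia. }
  apply (Hbound d). pose proof (Nat.pow_gt_lin_r 2 d ltac:(lia)). nia.
Qed.

(* Equivalently n - a' + 1 <= (1 - 1/c) (n - a + 1). *)
Definition geom_step (n c a a' : nat) : Prop := a < a' /\ n - a + 1 <= c * (a' - a).

Lemma block_gap_geom_step x K n a a' :
  1 <= K -> (forall i, x i <= K * 2 ^ i) ->
  block_gap x n a a' -> geom_step n (4 * K) a a'.
Proof.
  intros HK HxK [Haa' Hspaced]; split; [exact Haa'|].
  destruct (Nat.le_gt_cases (n - a) (2 * K)) as [Hnear|Hfar]; [nia|].
  destruct (exists_dyadic_level K (n - a) HK ltac:(lia)) as [i [Hlo Hhi]].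
  pose proof (Nat.pow_gt_lin_r 2 i ltac:(lia)).
  specialize (HxK i).
  assert (a + 2 ^ i <= a') by (apply Hspaced; nia).
  rewrite Nat.pow_succ_r' in Hhi. nia.
Qed.

Open Scope R_scope.

Lemma ln_le x y : 0 < x -> x <= y -> ln x <= ln y.
Proof.
  intros Hx [Hxy|<-]; [left; exact (ln_increasing x y Hx Hxy)|right; reflexivity].
Qed.

Lemma exp_le x y : x <= y -> exp x <= exp y.
Proof. intros [Hxy|<-]; [left; exact (exp_increasing x y Hxy)|right; reflexivity]. Qed.

Lemma ln_le_sub_1 x : 0 < x -> ln x <= x - 1.
Proof. intros Hx. pose proof (exp_ineq1_le (ln x)) as H. rewrite exp_ln in H; lra. Qed.

Lemma ln_gain c u v :
  0 <= c -> 0 < u -> u <= v -> v <= c * (v - u) -> 1 + c * ln u <= c * ln v.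
Proof.
  intros Hc Hu Huv Hv.
  assert (Hv0 : 0 < v) by lra.
  assert (Hratio : ln u - ln v <= u / v - 1).
  { replace (ln u - ln v) with (ln (u / v)).
    - apply ln_le_sub_1, Rdiv_lt_0_compat; assumption.
    - unfold Rdiv; rewrite ln_mult, ln_Rinv by (try apply Rinv_0_lt_compat; assumption). ring. }
  assert (Hdrop : c * (u / v - 1) <= -1).
  { assert (c * (u / v - 1) * v = - (c * (v - u))) by (field; lra). nra. }
  pose proof (Rmult_le_compat_l c _ _ Hc Hratio). lra.
Qed.

Lemma geom_chain_length (n c a : nat) (l : list nat) :
  Sorted (geom_step n c) (a :: l) -> Forall (fun a => (a <= n)%nat) (a :: l) ->
  INR (length (a :: l)) <= 1 + INR c * ln (INR (n - a + 1)).
Proof.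
  revert a; induction l as [|a' l IH]; intros a Hsorted Hle.
  - simpl. assert (0 <= ln (INR (n - a + 1))).
    { rewrite <- ln_1. apply ln_le; [lra|]. apply (le_INR 1); lia. }
    pose proof (pos_INR c). nra.
  - apply Sorted_inv in Hsorted as [Hsorted Hhd]. inversion Hhd as [|? ? [Haa' Hgeom]]; subst.
    inversion Hle as [|? ? _ Hle']. inversion Hle' as [|? ? Ha'n _]; subst.
    specialize (IH a' Hsorted Hle').
    assert (Hgain : 1 + INR c * ln (INR (n - a' + 1)) <= INR c * ln (INR (n - a + 1))).
    { apply ln_gain.
      - apply pos_INR.
      - apply lt_0_INR; lia.
      - apply le_INR; lia.
      - rewrite <- minus_INR, <- mult_INR by lia. apply le_INR.
        replace (n - a + 1 - (n - a' + 1))%nat with (a' - a)%nat by lia. exact Hgeom. }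
    change (length (a :: a' :: l)) with (S (length (a' :: l))). rewrite S_INR. lra.
Qed.

Lemma length_blocks_le x (K n : nat) :
  (1 <= K)%nat -> (forall i, (x i <= K * 2 ^ i)%nat) ->
  INR (length (blocks x n)) <= 1 + INR (4 * K) * ln (INR (n + 1)).
Proof.
  intros HK HxK.
  assert (Hln : 0 <= ln (INR (n + 1))).
  { rewrite <- ln_1. apply ln_le; [lra|]. apply (le_INR 1); lia. }
  pose proof (pos_INR (4 * K)).
  destruct (blocks_starts x n) as [Hgap Hle].
  rewrite <- (length_map (@fst nat nat) (blocks x n) : length _ = length (A := block) _).
  destruct (map fst (blocks x n)) as [|a l]; [cbn [length INR]; nra|].
  eapply Rle_trans.
  - apply geom_chain_length; [|exact Hle].
    exact (Sorted_impl _ _ _ (fun b b' => block_gap_geom_step x K n b b' HK HxK) Hgap).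
  - apply Rplus_le_compat_l, Rmult_le_compat_l; [assumption|].
    apply ln_le; [apply lt_0_INR; lia|apply le_INR; lia].
Qed.

Lemma exp_le_one_add_div eps : 0 <= eps < 1 -> exp eps <= (1 + eps) / (1 - eps).
Proof.
  intros Heps.
  assert (Hinv : exp eps * exp (- eps) = 1) by (rewrite <- exp_plus, Rplus_opp_r; exact exp_0).
  pose proof (exp_ineq1_le (- eps)). pose proof (exp_pos eps).
  apply (Rmult_le_reg_r (1 - eps)); [lra|].
  replace ((1 + eps) / (1 - eps) * (1 - eps)) with (1 + eps) by (field; lra).
  nra.
Qed.

Lemma marker_cond_at_multiple s eps i (N : nat) :
  0 <= s -> 0 < eps < 1 -> s / eps <= INR N ->
  marker_cond s eps i ((N + 1) * 2 ^ i).
Proof.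
  intros Hs Heps HsN; unfold marker_cond.
  pose proof (Nat.pow_nonzero 2 i ltac:(lia)) as Hpow.
  replace ((N + 1) * 2 ^ i + 1 - 2 ^ i)%nat with (N * 2 ^ i + 1)%nat by nia.
  rewrite plus_INR, !mult_INR, plus_INR; simpl.
  assert (HP : 1 <= INR (2 ^ i)) by (apply (le_INR 1); lia).
  pose proof (pos_INR N) as HN.
  set (P := INR (2 ^ i)) in *; set (M := INR N) in *.
  set (r := (M + 1) * P / (M * P + 1)).
  assert (Hr : 0 < r) by (apply Rdiv_lt_0_compat; nra).
  assert (HsM : s <= eps * M).
  { replace s with (s / eps * eps) by (field; lra). nra. }
  assert (Hexcess : s * (r - 1) <= eps).
  { assert (HMP : 0 < M * P + 1) by nra.
    assert (Hr1 : s * (r - 1) * (M * P + 1) = s * (P - 1)) by (unfold r; field; lra).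
    assert (0 <= (eps * M - s) * (P - 1)) by (apply Rmult_le_pos; lra).
    assert (s * (P - 1) <= eps * (M * P + 1)) by nra.
    apply (Rmult_le_reg_r (M * P + 1)); [exact HMP|]. lra. }
  pose proof (ln_le_sub_1 r Hr).
  unfold Rpower. eapply Rle_trans; [apply exp_le|apply exp_le_one_add_div; lra]. nra.
Qed.

Lemma is_marker_le s eps i xi (N : nat) :
  0 <= s -> 0 < eps < 1 -> s / eps <= INR N ->
  is_marker s eps i xi -> (xi <= (N + 1) * 2 ^ i)%nat.
Proof.
  intros Hs Heps HsN [_ [_ Hmin]].
  destruct (Nat.le_gt_cases xi ((N + 1) * 2 ^ i)) as [Hle|Hgt]; [exact Hle|].
  exfalso; apply (Hmin ((N + 1) * 2 ^ i)%nat); [nia|exact Hgt|].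
  exact (marker_cond_at_multiple s eps i N Hs Heps HsN).
Qed.

Lemma exists_nat_ceil q : 0 <= q -> exists N : nat, q <= INR N < q + 1.
Proof.
  intros Hq. destruct (Zceil_bound q) as [Hlo Hhi].
  assert (Hz : (0 <= Zceil q)%Z) by (apply le_IZR; lra).
  exists (Z.to_nat (Zceil q)).
  rewrite INR_IZR_INZ, Z2Nat.id by exact Hz. lra.
Qed.

Lemma one_add_mul_ln_succ_le q c m :
  0 <= q -> 0 <= c <= 4 * (q + 2) -> 2 <= m ->
  1 + c * ln (m + 1) <= 18 * (1 + q) * ln m.
Proof.
  intros Hq Hc Hm.
  assert (Hhalf : / 2 <= ln m) by (pose proof ln_lt_2; pose proof (ln_le 2 m ltac:(lra) Hm); lra).
  assert (Hsucc : ln (m + 1) <= 2 * ln m).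
  { apply Rle_trans with (ln (2 * m)); [apply ln_le; lra|].
    rewrite ln_mult by lra. pose proof (ln_le 2 m ltac:(lra) Hm). lra. }
  assert (0 <= ln (m + 1)) by (rewrite <- ln_1; apply ln_le; lra).
  assert (c * ln (m + 1) <= 4 * (q + 2) * (2 * ln m)) by (apply Rmult_le_compat; lra).
  nra.
Qed.

Theorem lemma2 :
  exists C : R, 0 < C /\
  forall (s eps : R), 0 < s -> 0 < eps < 1 ->
  forall x : nat -> nat, (forall i : nat, is_marker s eps i (x i)) ->
  forall n : nat, (2 <= n)%nat ->
  INR (length (blocks x n)) <= C * (1 + s / eps) * ln (INR n).
Proof.
  exists 18; split; [lra|].
  intros s eps Hs Heps x Hx n Hn.
  assert (Hq : 0 <= s / eps) by (apply Rlt_le, Rdiv_lt_0_compat; lra).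
  destruct (exists_nat_ceil (s / eps) Hq) as [N [HqN HNq]].
  assert (HxK : forall i, (x i <= (N + 1) * 2 ^ i)%nat)
    by (intros i; exact (is_marker_le s eps i (x i) N (Rlt_le _ _ Hs) Heps HqN (Hx i))).
  eapply Rle_trans; [apply (length_blocks_le x (N + 1) n); [lia|exact HxK]|].
  rewrite plus_INR; apply one_add_mul_ln_succ_le.
  - lra.
  - rewrite mult_INR, plus_INR; simpl. pose proof (pos_INR N). lra.
  - apply (le_INR 2) in Hn; simpl in Hn; lra.
Qed.
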